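(* Suppose $c\ge a\ge d_1>0$ and $c\ge b>d_2>0$ are real numbers. Then the equation $$d_1^{-\beta}+d_2^{-\beta}-a^{-\beta}-b^{-\beta}-c^{-\beta}+1=0$$ has at most one solution $\beta>0$. *)

From Stdlib Require Import Reals.
Open Scope R_scope.

Definition Feq (a b c d1 d2 beta : R) : R :=
  Rpower d1 (- beta) + Rpower d2 (- beta) - Rpower a (- beta)
  - Rpower b (- beta) - Rpower c (- beta) + 1.

From Stdlib Require Import Reals Lra.
Open Scope R_scope.

(* Write C = ln c and put A1 = C - ln d1, A2 = C - ln a,
   B1 = C - ln d2, B2 = C - ln b.  The hypotheses say exactly that
   0 <= A2 <= A1 and 0 <= B2 < B1, and multiplying F(t) by c^t = exp (C t)
   gives the exponential sum
     G(t) = e^(A1 t) - e^(A2 t) + e^(B1 t) - e^(B2 t) + e^(C t) - 1,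
   which has the same zeros as F and satisfies G(0) = 0.  Its second
   derivative  A1^2 e^(A1 t) - A2^2 e^(A2 t) + B1^2 e^(B1 t) - B2^2 e^(B2 t)
   + C^2 e^(C t)  is positive for t >= 0, because  lam |-> lam^2 e^(lam t)
   is increasing on [0, +oo).  Hence G' is strictly increasing on [0, +oo),
   and by Rolle's theorem a function vanishing at 0 with such a derivative
   has at most one positive zero. *)

Lemma strict_increase_of_pos_derivative (f f' : R -> R) :
  (forall t, derivable_pt_lim f t (f' t)) ->
  (forall t, 0 <= t -> 0 < f' t) ->
  forall x y, 0 <= x -> x < y -> f x < f y.
Proof.
  intros Hf Hpos x y Hx Hxy.
  destruct (MVT_cor2 f f' x y Hxy (fun t _ => Hf t)) as [e [He Hin]].
  assert (0 < f' e * (y - x)) by (apply Rmult_lt_0_compat; [apply Hpos|]; lra).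
  lra.
Qed.

Lemma rolle (f f' : R -> R) (x y : R) :
  (forall t, derivable_pt_lim f t (f' t)) ->
  x < y -> f x = f y -> exists e, x < e < y /\ f' e = 0.
Proof.
  intros Hf Hxy Hfxy.
  destruct (MVT_cor2 f f' x y Hxy (fun t _ => Hf t)) as [e [He Hin]].
  exists e; split; [exact Hin|].
  assert (Hprod : f' e * (y - x) = 0) by lra.
  destruct (Rmult_integral _ _ Hprod); [assumption | lra].
Qed.

(* A function vanishing at 0 whose derivative is strictly increasing on
   [0, +oo) has at most one positive zero: two positive zeros x < y would
   give, via Rolle on [0, x] and [x, y], two distinct zeros of f'. *)
Lemma unique_positive_zero (f f' : R -> R) :
  (forall t, derivable_pt_lim f t (f' t)) ->
  (forall x y, 0 <= x -> x < y -> f' x < f' y) ->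
  f 0 = 0 ->
  forall x y, 0 < x -> 0 < y -> f x = 0 -> f y = 0 -> x = y.
Proof.
  intros Hf Hmono H0.
  assert (Hlt : forall x y, 0 < x -> x < y -> f x = 0 -> f y = 0 -> False).
  { intros x y Hx Hxy Fx Fy.
    destruct (rolle f f' 0 x Hf Hx ltac:(congruence)) as [e1 [He1 D1]].
    destruct (rolle f f' x y Hf Hxy ltac:(congruence)) as [e2 [He2 D2]].
    pose proof (Hmono e1 e2 ltac:(lra) ltac:(lra)); lra. }
  intros x y Hx Hy Fx Fy.
  destruct (Rtotal_order x y) as [l | [e | l]]; [exfalso | exact e | exfalso].
  - exact (Hlt x y Hx l Fx Fy).
  - exact (Hlt y x Hy l Fy Fx).
Qed.

Definition wexp (k : nat) (lam t : R) : R := lam ^ k * exp (lam * t).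

Lemma derivable_pt_lim_wexp (k : nat) (lam t : R) :
  derivable_pt_lim (wexp k lam) t (wexp (S k) lam t).
Proof.
  unfold wexp.
  apply derivable_pt_lim_ext with
    (f := mult_real_fct (lam ^ k) (comp exp (mult_real_fct lam id))).
  { intro s; reflexivity. }
  replace (lam ^ S k * exp (lam * t))
    with (lam ^ k * (exp (lam * t) * (lam * 1))) by (simpl; ring).
  apply derivable_pt_lim_scal, derivable_pt_lim_comp.
  - apply derivable_pt_lim_scal, derivable_pt_lim_id.
  - apply derivable_pt_lim_exp.
Qed.

Lemma wexp_strict_mono (k : nat) (mu lam t : R) :
  0 <= mu -> mu < lam -> 0 <= t -> wexp (S k) mu t < wexp (S k) lam t.
Proof.
  intros Hmu Hlt Ht. unfold wexp.
  assert (Hpow : mu ^ S k < lam ^ S k).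
  { induction k as [| k IH]; [simpl; lra|].
    change (mu * mu ^ S k < lam * lam ^ S k).
    apply Rmult_le_0_lt_compat; [lra | apply pow_le; lra | lra | exact IH]. }
  assert (Hexp : exp (mu * t) <= exp (lam * t)).
  { assert (Harg : mu * t <= lam * t) by (apply Rmult_le_compat_r; lra).
    destruct Harg as [Harg | ->]; [left; apply exp_increasing, Harg | right; reflexivity]. }
  apply Rlt_le_trans with (lam ^ S k * exp (mu * t)).
  - apply Rmult_lt_compat_r; [apply exp_pos | exact Hpow].
  - apply Rmult_le_compat_l; [apply pow_le; lra | exact Hexp].
Qed.

Section ExponentialSum.

Variables A1 A2 B1 B2 C : R.

(* The k-th derivative (k >= 1) of the exponential sum G of the proof
   outline; for k = 0 it is G + 1. *)
Definition expsum (k : nat) (t : R) : R :=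
  wexp k A1 t - wexp k A2 t + wexp k B1 t - wexp k B2 t + wexp k C t.

Lemma derivable_pt_lim_expsum (k : nat) (t : R) :
  derivable_pt_lim (expsum k) t (expsum (S k) t).
Proof.
  unfold expsum.
  apply derivable_pt_lim_plus; [| apply derivable_pt_lim_wexp].
  apply derivable_pt_lim_minus; [| apply derivable_pt_lim_wexp].
  apply derivable_pt_lim_plus; [| apply derivable_pt_lim_wexp].
  apply derivable_pt_lim_minus; apply derivable_pt_lim_wexp.
Qed.

Hypotheses (HA : A2 <= A1) (HA2 : 0 <= A2) (HB : B2 < B1) (HB2 : 0 <= B2).

Lemma expsum2_pos (t : R) : 0 <= t -> 0 < expsum 2 t.
Proof.
  intros Ht. unfold expsum.
  assert (HAle : wexp 2 A2 t <= wexp 2 A1 t).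
  { destruct (Rle_lt_or_eq_dec _ _ HA) as [Hlt | ->]; [| lra].
    left; apply wexp_strict_mono; assumption. }
  assert (HBlt : wexp 2 B2 t < wexp 2 B1 t) by (apply wexp_strict_mono; assumption).
  assert (HC : 0 <= wexp 2 C t).
  { unfold wexp. apply Rmult_le_pos; [apply pow2_ge_0 | left; apply exp_pos]. }
  lra.
Qed.

Lemma expsum_level_one_unique (x y : R) :
  0 < x -> 0 < y -> expsum 0 x = 1 -> expsum 0 y = 1 -> x = y.
Proof.
  intros Hx Hy Fx Fy.
  apply (unique_positive_zero (fun t => expsum 0 t - 1) (expsum 1)); try lra.
  - intro t. replace (expsum 1 t) with (expsum 1 t - 0) by ring.
    apply derivable_pt_lim_minus;
      [apply derivable_pt_lim_expsum | apply derivable_pt_lim_const].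
  - apply strict_increase_of_pos_derivative with (f' := expsum 2).
    + apply derivable_pt_lim_expsum.
    + exact expsum2_pos.
  - unfold expsum, wexp; rewrite !Rmult_0_r, exp_0; simpl; ring.
Qed.

End ExponentialSum.

Lemma Feq_as_expsum (a b c d1 d2 t : R) :
  expsum (ln c - ln d1) (ln c - ln a) (ln c - ln d2) (ln c - ln b) (ln c) 0 t - 1
  = exp (ln c * t) * Feq a b c d1 d2 t.
Proof.
  assert (Hshift : forall y,
             exp (ln c * t) * exp (- t * ln y) = exp ((ln c - ln y) * t)).
  { intro y. rewrite <- exp_plus. f_equal. ring. }
  assert (Hunit : exp (ln c * t) * exp (- t * ln c) = 1).
  { rewrite Hshift, Rminus_diag, Rmult_0_l. apply exp_0. }
  unfold expsum, wexp, Feq, Rpower. simpl. rewrite !Rmult_1_l, <- !Hshift.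
  lra.
Qed.

Theorem lemma1 (a b c d1 d2 : R)
  (hca : a <= c) (had : d1 <= a) (hd1 : 0 < d1)
  (hcb : b <= c) (hbd : d2 < b) (hd2 : 0 < d2) :
  forall beta1 beta2 : R,
    0 < beta1 -> 0 < beta2 ->
    Feq a b c d1 d2 beta1 = 0 -> Feq a b c d1 d2 beta2 = 0 ->
    beta1 = beta2.
Proof.
  intros beta1 beta2 Hb1 Hb2 F1 F2.
  assert (Hlog : forall x y, 0 < x -> x <= y -> ln x <= ln y).
  { intros x y Hx [Hxy | ->]; [left; apply ln_increasing |]; lra. }
  pose proof (Hlog d1 a hd1 had); pose proof (Hlog a c ltac:(lra) hca).
  pose proof (Hlog b c ltac:(lra) hcb); pose proof (ln_increasing d2 b hd2 hbd).
  apply (expsum_level_one_unique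
           (ln c - ln d1) (ln c - ln a) (ln c - ln d2) (ln c - ln b) (ln c));
    try lra.
  - pose proof (Feq_as_expsum a b c d1 d2 beta1) as E; rewrite F1 in E; lra.
  - pose proof (Feq_as_expsum a b c d1 d2 beta2) as E; rewrite F2 in E; lra.
Qed.
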